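(* Let $T$ be a rooted binary phylogenetic tree with root of out-degree 2 and leaf set $X$, $|X|\ge3$, under the $N_2$ model. Let $y,z$ be a cherry with parent $w$, $p_y,p_z$ the substitution probabilities of $(w,y),(w,z)$, $\theta=(1-p_y)(1-p_z)+p_yp_z$ and $\pi=p_yp_z/\theta$. Then $$RA_\varphi(T)=\theta\cdot RA_\varphi(T'_\pi)+(1-\theta)\cdot RA_\varphi(T'_{0.5}).$$
   Context: A rooted binary phylogenetic tree is a finite tree with a distinguished root vertex $\rho$, all edges directed away from $\rho$, in which $\rho$ has out-degree 2 (or 1), and every other vertex has in-degree 1 and out-degree 0 or 2; out-degree-0 vertices are leaves. Under the Neyman 2-state model $N_2$, each edge $e$ carries a substitution probability $p_e\in[0,\frac12]$; given the root state, states propagate independently along edges, each edge $(u,v)$ changing state with probability $p_e$; $f$ is the restriction of the states to the leaves. The coin-toss method $\varphi$: leaves get their states $f(x)$; proceeding towards the root, a vertex whose two children have equal states gets that state, otherwise one of the two states chosen by an independent fair coin toss; a vertex with a single child gets its child's state. $RA_\varphi(T)$ is the probability that the state assigned to the root equals the true root state. Vertices of in- and out-degree 1 may be suppressed (merging consecutive edges with substitution probabilities $a,b$ into one with probability $a+b-2ab$). For $q\in[0,\frac12]$, $T'_q$ is obtained from $T$ by deleting the leaves $y,z$ and their incident edges, attaching a new leaf $w'$ to $w$ via an edge with substitution probability $q$, and suppressing $w$; in particular $T'_{0.5}$ is $T'_q$ with $q=\frac12$. *)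

From Stdlib Require Import Reals List Bool.
Import ListNotations.
Open Scope R_scope.

(* Rooted binary trees whose every vertex has out-degree 0 (leaf) or 2.
   Each child edge carries its substitution probability:
   [Node p1 t1 p2 t2] has edges with probabilities p1 (to t1) and p2 (to t2).
   Leaves are identified by their left-to-right position. *)
Inductive tree : Type :=
| Leaf : tree
| Node : R -> tree -> R -> tree -> tree.

Fixpoint nleaves (t : tree) : nat :=
  match t with
  | Leaf => 1%nat
  | Node _ a _ b => (nleaves a + nleaves b)%nat
  end.

Fixpoint valid (t : tree) : Prop :=
  match t with
  | Leaf => True
  | Node p1 a p2 b => 0 <= p1 <= 1/2 /\ 0 <= p2 <= 1/2 /\ valid a /\ valid b
  end.

Fixpoint all_chars (n : nat) : list (list bool) :=
  match n with
  | O => [[]]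
  | S m => map (cons false) (all_chars m) ++ map (cons true) (all_chars m)
  end.

Definition sumR {A : Type} (g : A -> R) (l : list A) : R :=
  fold_right (fun x acc => g x + acc) 0 l.

Definition trans (p : R) (a b : bool) : R := if Bool.eqb a b then 1 - p else p.

(* lik t s f : probability under N2 that the leaves of t (left to right)
   show the character f, given state s at the root of t. *)
Fixpoint lik (t : tree) (s : bool) (f : list bool) : R :=
  match t with
  | Leaf => match f with [x] => if Bool.eqb x s then 1 else 0 | _ => 0 end
  | Node p1 a p2 b =>
      let f1 := firstn (nleaves a) f in
      let f2 := skipn (nleaves a) f in
      sumR (fun s1 => trans p1 s s1 * lik a s1 f1) [false; true] *
      sumR (fun s2 => trans p2 s s2 * lik b s2 f2) [false; true]
  end.

(* coin t f a : probability that the coin-toss method assigns state a to the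
   root of t, given leaf character f (coin tosses fair and independent). *)
Fixpoint coin (t : tree) (f : list bool) (a : bool) : R :=
  match t with
  | Leaf => match f with [x] => if Bool.eqb x a then 1 else 0 | _ => 0 end
  | Node _ l _ r =>
      let f1 := firstn (nleaves l) f in
      let f2 := skipn (nleaves l) f in
      coin l f1 a * coin r f2 a
      + / 2 * (coin l f1 a * coin r f2 (negb a) + coin l f1 (negb a) * coin r f2 a)
  end.

(* RA_phi(T): probability that the reconstructed root state equals the true
   root state, the true root state being uniform on {0,1}. *)
Definition RA (t : tree) : R :=
  / 2 * sumR (fun a => sumR (fun f => lik t a f * coin t f a) (all_chars (nleaves t)))
             [false; true].

(* One-hole contexts: locate a subtree (here the cherry below w). *)
Inductive ctx : Type :=
| Hole : ctx
| CL : R -> ctx -> R -> tree -> ctx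
| CR : R -> tree -> R -> ctx -> ctx.

Fixpoint plug (c : ctx) (t : tree) : tree :=
  match c with
  | Hole => t
  | CL p1 c' p2 b => Node p1 (plug c' t) p2 b
  | CR p1 a p2 c' => Node p1 a p2 (plug c' t)
  end.

Definition is_hole (c : ctx) : bool := match c with Hole => true | _ => false end.

Fixpoint plug_mod (c : ctx) (g : R -> R) (t : tree) : tree :=
  match c with
  | Hole => t
  | CL p1 c' p2 b => Node (if is_hole c' then g p1 else p1) (plug_mod c' g t) p2 b
  | CR p1 a p2 c' => Node p1 a (if is_hole c' then g p2 else p2) (plug_mod c' g t)
  end.

(* substitution probability of two merged consecutive edges *)
Definition merge (a b : R) : R := a + b - 2 * a * b.

(* T'_q for T = plug c (cherry y z below w): y, z deleted, a new leaf w'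
   attached to w by an edge with probability q, then w suppressed. *)
Definition Tprime (c : ctx) (q : R) : tree := plug_mod c (fun pw => merge pw q) Leaf.

(** The coin-toss reconstruction at the parent [w] of the cherry only sees
    whether the two leaves agree.  Conditioned on the state at [w], they agree
    with probability [theta], and then behave like a single leaf hanging from
    [w] by an edge of substitution probability [pi]; otherwise the coin toss
    makes [w] uniformly random, exactly as a leaf hanging by an edge of
    probability [1/2].  So the joint law of (true state, reconstructed state)
    of the cherry is the [theta]-mixture of those of [T'_pi] and [T'_0.5] at
    [w], and this mixture propagates to the root because, away from the
    cherry, the coin-toss recursion is linear in the contribution of each
    subtree. *)
From Stdlib Require Import Reals Lra Lia List.
Import ListNotations.
Open Scope R_scope.

Lemma sumR_app {A : Type} (g : A -> R) (l1 l2 : list A) :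
  sumR g (l1 ++ l2) = sumR g l1 + sumR g l2.
Proof. induction l1; simpl; [ring | rewrite IHl1; ring]. Qed.

Lemma sumR_map {A B : Type} (g : B -> R) (h : A -> B) (l : list A) :
  sumR g (map h l) = sumR (fun x => g (h x)) l.
Proof. induction l; simpl; [ring | rewrite IHl; ring]. Qed.

Lemma sumR_all_chars_add (n m : nat) (g : list bool -> R)
    (G : list bool -> list bool -> R) :
  (forall f, g f = G (firstn n f) (skipn n f)) ->
  sumR g (all_chars (n + m))
  = sumR (fun f1 => sumR (fun f2 => G f1 f2) (all_chars m)) (all_chars n).
Proof.
  revert g G; induction n as [|n IH]; intros g G Hg.
  - simpl; rewrite Rplus_0_r.
    induction (all_chars m) as [|f l IHl]; simpl; [ring | now rewrite Hg, IHl].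
  - simpl; rewrite !sumR_app, !sumR_map; f_equal.
    + apply (IH _ (fun f1 f2 => G (false :: f1) f2)); intros; apply Hg.
    + apply (IH _ (fun f1 f2 => G (true :: f1) f2)); intros; apply Hg.
Qed.

Lemma sumR_bool_exchange {A : Type} (w : bool -> R) (g : bool -> A -> R)
    (h : A -> R) (l : list A) :
  sumR (fun x => sumR (fun s => w s * g s x) [false; true] * h x) l
  = sumR (fun s => w s * sumR (fun x => g s x * h x) l) [false; true].
Proof. induction l; simpl in *; [ring | rewrite IHl; ring]. Qed.

Definition coin_step (u v : bool -> R) (a : bool) : R :=
  u a * v a + / 2 * (u a * v (negb a) + u (negb a) * v a).

Lemma sumR_coin_step_r {A : Type} (c : R) (u : bool -> R) (B : A -> R)
    (y : A -> bool -> R) (a : bool) (l : list A) :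
  sumR (fun x => c * B x * coin_step u (y x) a) l
  = c * coin_step u (fun b => sumR (fun x => B x * y x b) l) a.
Proof. unfold coin_step; induction l; simpl; [ring | rewrite IHl; ring]. Qed.

Lemma sumR_coin_step {A C : Type} (P : A -> R) (Q : C -> R)
    (x : A -> bool -> R) (y : C -> bool -> R) (a : bool) (l1 : list A) (l2 : list C) :
  sumR (fun i => sumR (fun j => P i * Q j * coin_step (x i) (y j) a) l2) l1
  = coin_step (fun b => sumR (fun i => P i * x i b) l1)
              (fun b => sumR (fun j => Q j * y j b) l2) a.
Proof.
  induction l1 as [|i l1 IH]; simpl.
  - unfold coin_step; simpl; ring.
  - rewrite sumR_coin_step_r, IH; unfold coin_step; simpl; ring.
Qed.

Definition joint (t : tree) (s a : bool) : R :=
  sumR (fun f => lik t s f * coin t f a) (all_chars (nleaves t)).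

Definition edge_joint (p : R) (t : tree) (s a : bool) : R :=
  sumR (fun s1 => trans p s s1 * joint t s1 a) [false; true].

Lemma RA_joint (t : tree) : RA t = / 2 * (joint t false false + joint t true true).
Proof. unfold RA, joint; simpl; ring. Qed.

Lemma joint_Node (p1 p2 : R) (l r : tree) (s a : bool) :
  joint (Node p1 l p2 r) s a = coin_step (edge_joint p1 l s) (edge_joint p2 r s) a.
Proof.
  unfold joint at 1; cbn [nleaves lik].
  rewrite (sumR_all_chars_add _ _ _ (fun f1 f2 =>
    sumR (fun s1 => trans p1 s s1 * lik l s1 f1) [false; true]
    * sumR (fun s2 => trans p2 s s2 * lik r s2 f2) [false; true]
    * coin_step (coin l f1) (coin r f2) a)) by reflexivity.
  rewrite sumR_coin_step.
  unfold coin_step, edge_joint, joint; rewrite !sumR_bool_exchange; reflexivity.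
Qed.

Lemma edge_joint_bool (p : R) (t : tree) (s a : bool) :
  edge_joint p t s a = trans p s false * joint t false a + trans p s true * joint t true a.
Proof. unfold edge_joint; simpl; ring. Qed.

Lemma edge_joint_Leaf (p : R) (s a : bool) : edge_joint p Leaf s a = trans p s a.
Proof. unfold edge_joint, joint, trans; destruct s, a; simpl; ring. Qed.

Lemma trans_merge (p q : R) (s a : bool) :
  sumR (fun s1 => trans p s s1 * trans q s1 a) [false; true] = trans (merge p q) s a.
Proof. unfold trans, merge; destruct s, a; simpl; ring. Qed.

Definition cherry_agree (py pz : R) : R := (1 - py) * (1 - pz) + py * pz.

Lemma joint_cherry (py pz : R) (s a : bool) :
  cherry_agree py pz <> 0 ->
  joint (Node py Leaf pz Leaf) s a
  = cherry_agree py pz * trans (py * pz / cherry_agree py pz) s a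
    + (1 - cherry_agree py pz) * trans (1/2) s a.
Proof.
  intro Hagree; rewrite joint_Node; unfold coin_step; rewrite !edge_joint_Leaf.
  unfold cherry_agree in *; unfold trans; destruct s, a; simpl; field; exact Hagree.
Qed.

Lemma edge_joint_cherry (py pz : R) :
  cherry_agree py pz <> 0 ->
  forall p s a, edge_joint p (Node py Leaf pz Leaf) s a
  = cherry_agree py pz * edge_joint (merge p (py * pz / cherry_agree py pz)) Leaf s a
    + (1 - cherry_agree py pz) * edge_joint (merge p (1/2)) Leaf s a.
Proof.
  intros Hagree p s a; rewrite !edge_joint_Leaf, <- !trans_merge, edge_joint_bool.
  rewrite !joint_cherry by exact Hagree; simpl; ring.
Qed.

(* For [c = Hole] there is no edge entering the hole for [g1], [g2], [g3] to act on. *)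
Lemma joint_plug_mod_linear (c : ctx) (g1 g2 g3 : R -> R) (t1 t2 t3 : tree) (alpha beta : R) :
  is_hole c = false ->
  (forall p s a, edge_joint (g1 p) t1 s a
                 = alpha * edge_joint (g2 p) t2 s a + beta * edge_joint (g3 p) t3 s a) ->
  forall s a, joint (plug_mod c g1 t1) s a
              = alpha * joint (plug_mod c g2 t2) s a + beta * joint (plug_mod c g3 t3) s a.
Proof.
  intros Hc Hedge.
  induction c as [|p1 c IH p2 b|p1 b p2 c IH]; [discriminate| |]; intros s a;
    cbn [plug_mod]; rewrite !joint_Node; unfold coin_step;
    destruct c; cbn [is_hole].
  all: try (cbn [plug_mod]; rewrite !Hedge; ring).
  all: rewrite !edge_joint_bool, !IH by reflexivity; ring.
Qed.

Lemma plug_as_plug_mod (c : ctx) (t : tree) : plug c t = plug_mod c (fun p => p) t.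
Proof.
  induction c as [|p1 c IH p2 b|p1 b p2 c IH]; simpl; rewrite ?IH;
    try destruct (is_hole c); reflexivity.
Qed.

Lemma valid_plug (c : ctx) (t : tree) : valid (plug c t) -> valid t.
Proof. induction c; simpl; tauto. Qed.

Theorem theorem4 (c : ctx) (py pz : R) :
  valid (plug c (Node py Leaf pz Leaf)) ->
  (3 <= nleaves (plug c (Node py Leaf pz Leaf)))%nat ->
  let theta := (1 - py) * (1 - pz) + py * pz in
  let pi := py * pz / theta in
  RA (plug c (Node py Leaf pz Leaf))
  = theta * RA (Tprime c pi) + (1 - theta) * RA (Tprime c (1/2)).
Proof.
  intros Hvalid Hleaves theta pi.
  destruct (valid_plug _ _ Hvalid) as [Hpy [Hpz _]].
  assert (Hagree : cherry_agree py pz <> 0) by (unfold cherry_agree; nra).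
  assert (Hc : is_hole c = false) by (destruct c; [simpl in Hleaves; lia | reflexivity ..]).
  unfold Tprime; rewrite plug_as_plug_mod, !RA_joint.
  rewrite !(joint_plug_mod_linear c _ _ _ _ _ _ theta (1 - theta) Hc
              (edge_joint_cherry py pz Hagree)).
  unfold pi, theta, cherry_agree; ring.
Qed.
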